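(* Let $S$ be a finite alphabet and $X \subset S^{\mathbb{Z}}$ a subshift. For all words $u, v \in S^*$, if $C_X(u) = C_X(v)$, then $C_{X^{(1)}}(u) = C_{X^{(1)}}(v)$.
   Context: A subshift $X \subset S^{\mathbb{Z}}$ is a closed, shift-invariant subset of $S^{\mathbb{Z}}$ (product topology, $S$ discrete). A word $w$ occurs in $X$, written $w \sqsubset X$, if it appears as a contiguous subword of some configuration of $X$. The context of a word $v \in S^*$ in $X$ is $C_X(v) = \{(w,w') \in (S^* )^2 \mid wvw' \sqsubset X\}$. The Cantor–Bendixson derivative $X^{(1)} = X'$ is the set of non-isolated points of $X$, i.e. $X' = \{x \in X \mid x \in \overline{X \setminus \{x\}}\}$; it is again a subshift. *)

From mathcomp Require Import all_boot.
From Stdlib Require Import ZArith.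
Set Implicit Arguments. Unset Strict Implicit. Unset Printing Implicit Defensive.

Definition config (S : Type) := Z -> S.
Definition cset (S : Type) := config S -> Prop.

Definition shift (S : Type) (x : config S) : config S := fun i => x (Z.add i 1).
Definition shift_inv (S : Type) (x : config S) : config S := fun i => x (Z.sub i 1).

(* x and y agree on the window [-n, n]: basic neighbourhoods of the product topology. *)
Definition agree_on (S : Type) (n : nat) (x y : config S) : Prop :=
  forall i : Z, Z.le (Z.opp (Z.of_nat n)) i -> Z.le i (Z.of_nat n) -> x i = y i.

(* Closedness in the product topology: X contains all its limit points. *)
Definition closed_set (S : Type) (X : cset S) : Prop :=
  forall x : config S, (forall n : nat, exists y, X y /\ agree_on n x y) -> X x.

Definition shift_invariant (S : Type) (X : cset S) : Prop :=
  forall x : config S, X x -> X (shift x) /\ X (shift_inv x).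

Definition subshift (S : Type) (X : cset S) : Prop :=
  closed_set X /\ shift_invariant X.

Definition subword (S : Type) (x : config S) (i : Z) (m : nat) : seq S :=
  map (fun k => x (Z.add i (Z.of_nat k))) (iota 0 m).

Definition occurs (S : Type) (w : seq S) (X : cset S) : Prop :=
  exists x, X x /\ exists i : Z, subword x i (size w) = w.

Definition context (S : Type) (X : cset S) (v : seq S) : seq S * seq S -> Prop :=
  fun p => occurs (p.1 ++ v ++ p.2) X.

Definition CB_deriv (S : Type) (X : cset S) : cset S :=
  fun x => X x /\ forall n : nat, exists y, X y /\ y <> x /\ agree_on n x y.

From Pilot Require Import Defs.
From mathcomp Require Import all_boot zify.
From Stdlib Require Import ZArith Lia FunctionalExtensionality PropExtensionality.
Set Implicit Arguments. Unset Strict Implicit.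

(* Suppose C_X(u) = C_X(v) and let x be a non-isolated point of X
   in which w u w' occurs, with u at position j.  Replace this occurrence of u
   by v, shifting the right half of x accordingly ("splicing").
   - The spliced point lies in X: each of its central windows reads p v s,
     where p u s is a window of x; since C_X(u) = C_X(v), p v s occurs in X,
     and X is closed and shift-invariant.
   - The spliced point is non-isolated: points x' close to x still carry u at
     j, their splices stay close to the splice of x, and splicing is injective
     among points carrying the same word at j.
   - The splice of x contains w v w'.
   Hence C_{X'}(u) is included in C_{X'}(v), and equality follows by symmetry. *)

Local Open Scope Z_scope.

Section Windows.
Variable S : Type.
Implicit Types (x y : config S).

Lemma size_subword x i m : size (subword x i m) = m.
Proof. by rewrite /subword size_map size_iota. Qed.

Lemma nth_subword x i m d k : (k < m)%nat -> nth d (subword x i m) k = x (i + Z.of_nat k).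
Proof. by move=> Hk; rewrite /subword (nth_map 0%nat) ?size_iota // nth_iota. Qed.

Lemma subword_cat x i m n :
  subword x i (m + n)%nat = subword x i m ++ subword x (i + Z.of_nat m) n.
Proof.
have shift_iota : iota m n = map (addn m) (iota 0 n) by rewrite -iotaDl addn0.
rewrite /subword iotaD map_cat add0n shift_iota -map_comp; congr cat.
by apply: eq_map => k /=; congr (x _); lia.
Qed.

Lemma eq_subword x y i m :
  (forall k, (k < m)%nat -> x (i + Z.of_nat k) = y (i + Z.of_nat k)) ->
  subword x i m = subword y i m.
Proof. by move=> E; apply/eq_in_map => k; rewrite mem_iota => /andP[_ Hk]; exact: E. Qed.

Lemma subword_eq_at x y i m k : subword x i m = subword y i m ->
  (k < m)%nat -> x (i + Z.of_nat k) = y (i + Z.of_nat k).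
Proof. by move=> E Hk; rewrite -(nth_subword x i (x i) Hk) E nth_subword. Qed.

Lemma cat_eq_size (a b c d : seq S) :
  a ++ b = c ++ d -> size a = size c -> a = c /\ b = d.
Proof.
move=> E Hs; split.
  by have := congr1 (take (size a)) E; rewrite take_size_cat // Hs take_size_cat.
by have := congr1 (drop (size a)) E; rewrite drop_size_cat // Hs drop_size_cat.
Qed.

Lemma subword_cat3_inv x i w1 w2 w3 :
  subword x i (size (w1 ++ w2 ++ w3)) = w1 ++ w2 ++ w3 ->
  [/\ subword x i (size w1) = w1,
      subword x (i + Z.of_nat (size w1)) (size w2) = w2 &
      subword x (i + Z.of_nat (size w1) + Z.of_nat (size w2)) (size w3) = w3].
Proof.
rewrite !size_cat !subword_cat => E.
have [E1 E23] := cat_eq_size E (size_subword _ _ _).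
by have [E2 E3] := cat_eq_size E23 (size_subword _ _ _).
Qed.

End Windows.

Definition translate (S : Type) (x : config S) (t : Z) : config S :=
  fun i => x (i + t).

Lemma subword_translate (S : Type) (x : config S) t i m :
  subword (translate x t) i m = subword x (i + t) m.
Proof. by apply: eq_map => k; rewrite /translate; congr (x _); lia. Qed.

Lemma translate_invariant (S : Type) (X : cset S) (x : config S) (t : Z) :
  shift_invariant X -> X x -> X (translate x t).
Proof.
move=> HS Xx; elim/Z.peano_ind: t => [|t Xt|t Xt].
- by have -> : translate x 0 = x by apply: functional_extensionality => i;
    rewrite /translate Z.add_0_r.
- have -> : translate x (Z.succ t) = Defs.shift (translate x t).
    by apply: functional_extensionality => i; rewrite /Defs.shift /translate; congr (x _); lia.
  exact: (HS _ Xt).1.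
- have -> : translate x (Z.pred t) = shift_inv (translate x t).
    by apply: functional_extensionality => i; rewrite /shift_inv /translate; congr (x _); lia.
  exact: (HS _ Xt).2.
Qed.

(* Splicing: in x, the m cells starting at j are replaced by the word v, the
   part of x to the right being moved by size v - m cells. *)
Definition splice (S : Type) (x : config S) (j : Z) (m : nat) (v : seq S) : config S :=
  fun k => if k <? j then x k
           else if k <? j + Z.of_nat (size v) then nth (x k) v (Z.to_nat (k - j))
           else x (k - Z.of_nat (size v) + Z.of_nat m).

Section Splice.
Variables (S : Type) (j : Z) (m : nat) (v : seq S).
Implicit Types (x y : config S).

Lemma splice_left x k : k < j -> splice x j m v k = x k.
Proof. by rewrite /splice => /Z.ltb_lt ->. Qed.

Lemma splice_mid x k d : j <= k < j + Z.of_nat (size v) ->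
  splice x j m v k = nth d v (Z.to_nat (k - j)).
Proof.
move=> [/Z.ltb_ge Hj /Z.ltb_lt Hv]; rewrite /splice Hj Hv.
by apply: set_nth_default; lia.
Qed.

Lemma splice_right x k : j + Z.of_nat (size v) <= k ->
  splice x j m v k = x (k - Z.of_nat (size v) + Z.of_nat m).
Proof. by move=> Hk; rewrite /splice !(proj2 (Z.ltb_ge _ _)) //; lia. Qed.

Lemma splice_subword_left x i n : i + Z.of_nat n <= j ->
  subword (splice x j m v) i n = subword x i n.
Proof. by move=> Hn; apply: eq_subword => k Hk; rewrite splice_left //; lia. Qed.

Lemma splice_subword_mid x : subword (splice x j m v) j (size v) = v.
Proof.
apply: (@eq_from_nth _ (x j)); rewrite size_subword // => k Hk.
by rewrite nth_subword // (splice_mid _ (x j)); [congr nth; lia | lia].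
Qed.

Lemma splice_subword_right x i n : j + Z.of_nat (size v) <= i ->
  subword (splice x j m v) i n = subword x (i - Z.of_nat (size v) + Z.of_nat m) n.
Proof.
move=> Hi; apply: eq_map => k /=.
by rewrite splice_right; [congr (x _); lia | lia].
Qed.

Lemma splice_inj x y : subword x j m = subword y j m ->
  splice x j m v = splice y j m v -> x = y.
Proof.
move=> Exy Esp; apply: functional_extensionality => k.
have [Hl|Hk] := Z.lt_ge_cases k j.
  by rewrite -(splice_left x Hl) -(splice_left y Hl) Esp.
have [Hm|Hr] := Z.lt_ge_cases k (j + Z.of_nat m).
  have := subword_eq_at (k := Z.to_nat (k - j)) Exy ltac:(lia).
  by have -> : j + Z.of_nat (Z.to_nat (k - j)) = k by lia.
have Hr' : j + Z.of_nat (size v) <= k - Z.of_nat m + Z.of_nat (size v) by lia.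
have := splice_right x Hr'; rewrite Esp splice_right //.
by have -> : k - Z.of_nat m + Z.of_nat (size v) - Z.of_nat (size v) + Z.of_nat m = k by lia.
Qed.

End Splice.

Lemma splice_occurrence (S : Type) (x : config S) (i : Z) (w u w' v : seq S) :
  subword x i (size (w ++ u ++ w')) = w ++ u ++ w' ->
  subword (splice x (i + Z.of_nat (size w)) (size u) v) i (size (w ++ v ++ w'))
  = w ++ v ++ w'.
Proof.
case/subword_cat3_inv=> Hw _ Hw'.
rewrite !size_cat !subword_cat splice_subword_left ?Hw; last lia.
rewrite splice_subword_mid splice_subword_right; last lia.
have -> : i + Z.of_nat (size w) + Z.of_nat (size v) - Z.of_nat (size v) + Z.of_nat (size u)
          = i + Z.of_nat (size w) + Z.of_nat (size u) by lia.
by rewrite Hw'.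
Qed.

Section SameContext.
Variables (S : Type) (X : cset S) (u v : seq S).
Hypotheses (HX : subshift X) (Hctx : context X u = context X v).

(* Replacing an occurrence of u by v keeps a point inside X: every central
   window of the result reads p v s, where p u s is a window of the original. *)
Lemma splice_in x j : X x -> subword x j (size u) = u -> X (splice x j (size u) v).
Proof.
move=> Xx Hu; apply: HX.1 => n.
pose M := (n + size v + Z.abs_nat j + 1)%nat.
pose a := j - Z.of_nat M.
pose p := subword x a M.
pose s := subword x (j + Z.of_nat (size u)) M.
have a_M : a + Z.of_nat M = j by rewrite /a; lia.
have size_p : size p = M by rewrite size_subword.
have size_s : size s = M by rewrite size_subword.
have window_x : subword x a (size (p ++ u ++ s)) = p ++ u ++ s.
  by rewrite !size_cat size_p size_s subword_cat a_M (subword_cat x j) Hu.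
have [z [Xz [i0 Hz]]] : occurs (p ++ v ++ s) X.
  have : context X u (p, s) by exists x; split; last exists a.
  by rewrite Hctx.
have window_splice :
    subword (splice x j (size u) v) a (size (p ++ v ++ s)) = p ++ v ++ s.
  rewrite !size_cat size_p size_s subword_cat a_M (subword_cat _ j).
  rewrite splice_subword_left; last lia.
  rewrite splice_subword_mid splice_subword_right; last lia.
  by have -> : j + Z.of_nat (size v) - Z.of_nat (size v) + Z.of_nat (size u)
               = j + Z.of_nat (size u) by lia.
have same_window : subword (splice x j (size u) v) a (size (p ++ v ++ s))
                   = subword (translate z (i0 - a)) a (size (p ++ v ++ s)).
  by rewrite subword_translate window_splice Z.add_comm Z.sub_add.
exists (translate z (i0 - a)); split; first exact: translate_invariant HX.2 Xz.
move=> t Hlo Hhi.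
have := subword_eq_at (k := Z.to_nat (t - a)) same_window.
rewrite !size_cat size_p size_s.
have -> : a + Z.of_nat (Z.to_nat (t - a)) = t by rewrite /a; lia.
by apply; rewrite /a in Hlo Hhi *; lia.
Qed.

(* Replacing an occurrence of u by v keeps a point non-isolated: a nearby
   point x' still carries u at j, its splice is near the splice of x, and the
   two splices differ because splicing is injective. *)
Lemma splice_deriv x j :
  CB_deriv X x -> subword x j (size u) = u -> CB_deriv X (splice x j (size u) v).
Proof.
move=> [Xx non_isolated] Hu; split; first exact: splice_in.
move=> n; pose N := (n + size u + size v + Z.abs_nat j)%nat.
have [x' [Xx' [x'_ne x'_near]]] := non_isolated N.
have Hu' : subword x' j (size u) = u.
  by rewrite -[RHS]Hu; apply: eq_subword => k Hk; symmetry; apply: x'_near; lia.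
exists (splice x' j (size u) v); split; first exact: splice_in.
split.
  by move=> E; apply: x'_ne; apply: (splice_inj (v := v)) E; rewrite Hu Hu'.
move=> t Hlo Hhi.
have [Hl|Hk] := Z.lt_ge_cases t j; first by rewrite !splice_left //; apply: x'_near; lia.
have [Hm|Hr] := Z.lt_ge_cases t (j + Z.of_nat (size v)).
  by rewrite !(splice_mid _ _ (x j)).
by rewrite !splice_right //; apply: x'_near; lia.
Qed.

Lemma context_deriv_incl p : context (CB_deriv X) u p -> context (CB_deriv X) v p.
Proof.
case: p => w w' [x [Dx [i Hi]]].
have Hu : subword x (i + Z.of_nat (size w)) (size u) = u by case/subword_cat3_inv: Hi.
exists (splice x (i + Z.of_nat (size w)) (size u) v); split; first exact: splice_deriv.
by exists i; apply: splice_occurrence.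
Qed.

End SameContext.

Theorem lemma3 (S : finType) (X : cset S) (HX : subshift X) (u v : seq S) :
  context X u = context X v -> context (CB_deriv X) u = context (CB_deriv X) v.
Proof.
move=> Hctx; apply: functional_extensionality => p.
apply: propositional_extensionality; split.
- exact: context_deriv_incl.
- exact: context_deriv_incl HX (esym Hctx) p.
Qed.
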